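(* Let $\mathfrak X,\mathfrak Y$ be super operator systems. If $\varphi:\mathfrak X\to\mathfrak Y$ is a unital contractive (respectively completely contractive) $*$-linear map, then $\varphi$ is superpositive (respectively completely superpositive). If $\psi:\mathfrak X\to\mathfrak Y$ is a completely superpositive map, then $\psi$ is completely bounded with $\Vert\psi\Vert_{cb}\le 8\,\Vert\psi(\mathbf 1)\Vert$; if moreover $\psi$ is unital, then $\Vert\psi\Vert_{cb}\le 4$.
   Context: A $\mathbb Z_2$-graded Hilbert space is $\widehat{\mathcal H}=\mathcal H^{even}\oplus\mathcal H^{odd}$ with grading operator $\epsilon=\mathrm{diag}(1,-1)$, grading automorphism $\alpha(x)=\epsilon x\epsilon$ and superinvolution $x^*=\epsilon\,x^\dagger\,\epsilon$ ($x^\dagger$ the ordinary adjoint). A super operator system is an abstract unital operator space $(\mathfrak X,\mathbf 1)$ with an antilinear involution $*$ fixing $\mathbf 1$ such that $[x_{ij}]\mapsto[x_{ji}^*]$ is isometric on each $M_n(\mathfrak X)$; equivalently (up to complete isometry) a norm closed subspace of some $\mathcal B(\widehat{\mathcal H})$ containing the identity and invariant under the superinvolution. Superpositivity: represent $\mathfrak X$ (and likewise $\mathfrak Y$) completely isometrically, unitally and $*$-linearly (with respect to the superinvolution) in some $\mathcal B(\widehat{\mathcal H})$. For $x\in M_n(\mathfrak X)$ hermitian (i.e. $[x_{ij}]=[x_{ji}^*]$), write $x=x_0+x_1$ with $x_0=\frac12(x+\alpha(x))$ even and $x_1=\frac12(x-\alpha(x))$ odd ($\alpha$ applied entrywise),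 and put $\iota(x)=x_0+i\,x_1$; $x$ is called superpositive if $\iota(x)$ is a positive operator on $\widehat{\mathcal H}^n$. A $*$-linear map $\psi$ is superpositive if it maps superpositive elements of $\mathfrak X$ to superpositive elements of $\mathfrak Y$, and completely superpositive if every amplification $\psi_n:M_n(\mathfrak X)\to M_n(\mathfrak Y)$ does so. A map is unital if it sends $\mathbf 1$ to $\mathbf 1$. *)

From HB Require Import structures.
From mathcomp Require Import all_boot all_order all_algebra.
From mathcomp Require Import complex.
From mathcomp Require Import reals.
Set Implicit Arguments. Unset Strict Implicit. Unset Printing Implicit Defensive.
Import Order.TTheory GRing.Theory Num.Theory.
Local Open Scope ring_scope.
Local Open Scope complex_scope.

Section Hilbert.
Variables (R : realType) (H : lmodType R[i]) (ip : H -> H -> R[i]).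

Definition hnorm (x : H) : R := Num.sqrt (complex.Re (ip x x)).

Definition is_hilbert : Prop :=
  [/\ (forall a x y z, ip (a *: x + y) z = a * ip x z + ip y z),
      (forall x y, ip y x = (ip x y)^*),
      (forall x, 0 <= ip x x),
      (forall x, ip x x = 0 -> x = 0) &
      (forall u : nat -> H,
         (forall e : R, 0 < e -> exists N, forall m n, (N <= m)%N -> (N <= n)%N ->
              hnorm (u m - u n) < e) ->
         exists l, forall e : R, 0 < e -> exists N, forall n, (N <= n)%N ->
              hnorm (u n - l) < e)].

Definition lin_op (T : H -> H) : Prop :=
  forall (a : R[i]) x y, T (a *: x + y) = a *: T x + T y.

Definition is_adj (T S : H -> H) : Prop := forall x y, ip (T x) y = ip x (S y).

Definition bop (T : H -> H) : Prop :=
  [/\ lin_op T, (exists M : R, forall x, hnorm (T x) <= M * hnorm x)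
    & exists S, is_adj T S].

Definition opnorm_le (T : H -> H) (c : R) : Prop :=
  0 <= c /\ forall x, hnorm (T x) <= c * hnorm x.

(* Z_2-grading: eps = diag(1,-1) w.r.t. H = H^even (+) H^odd, i.e. a
   self-adjoint involution on H *)
Definition is_grading (eps : H -> H) : Prop :=
  [/\ lin_op eps, is_adj eps eps & forall x, eps (eps x) = x].

Variable eps : H -> H.

(* S = T^* (superinvolution):  T^* = eps T^dagger eps,
   equivalently T^dagger = eps T^* eps *)
Definition is_sadj (T S : H -> H) : Prop := is_adj T (fun y => eps (S (eps y))).

Definition super_opsys (X : (H -> H) -> Prop) : Prop :=
  [/\ (forall T, X T -> bop T),
      X id,
      (forall (a : R[i]) T U, X T -> X U -> X (fun x => a *: T x + U x)),
      (forall (Tn : nat -> H -> H) T, (forall n, X (Tn n)) -> bop T ->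
         (forall e : R, 0 < e -> exists N, forall n, (N <= n)%N ->
             opnorm_le (fun x => Tn n x - T x) e) -> X T) &
      (forall T, X T -> exists S, X S /\ is_sadj T S)].

Definition mx_in (X : (H -> H) -> Prop) n (x : 'I_n -> 'I_n -> H -> H) : Prop :=
  forall i j, X (x i j).

Definition mx_apply n (x : 'I_n -> 'I_n -> H -> H) (v : 'I_n -> H) : 'I_n -> H :=
  fun i => \sum_(j < n) x i j (v j).

Definition mnorm_le n (x : 'I_n -> 'I_n -> H -> H) (c : R) : Prop :=
  0 <= c /\ forall v : 'I_n -> H,
    \sum_(i < n) hnorm (mx_apply x v i) ^+ 2 <= c ^+ 2 * \sum_(i < n) hnorm (v i) ^+ 2.

Definition mx_pos n (x : 'I_n -> 'I_n -> H -> H) : Prop :=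
  forall v : 'I_n -> H, 0 <= \sum_(i < n) ip (mx_apply x v i) (v i).

Definition mx_herm n (x : 'I_n -> 'I_n -> H -> H) : Prop :=
  forall i j, is_sadj (x j i) (x i j).

(* alpha(T) = eps T eps ;  iota(T) = T_0 + i T_1 *)
Definition galpha (T : H -> H) : H -> H := fun h => eps (T (eps h)).
Definition giota (T : H -> H) : H -> H :=
  fun h => 2^-1 *: (T h + galpha T h) + ('i * 2^-1) *: (T h - galpha T h).

Definition mx_superpos n (x : 'I_n -> 'I_n -> H -> H) : Prop :=
  mx_herm x /\ mx_pos (fun i j => giota (x i j)).

End Hilbert.

Section Maps.
Variables (R : realType) (H K : lmodType R[i]) (ipH : H -> H -> R[i]) (ipK : K -> K -> R[i])
  (epsH : H -> H) (epsK : K -> K) (X : (H -> H) -> Prop) (Y : (K -> K) -> Prop).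
Variable phi : (H -> H) -> (K -> K).

Definition amplify n (x : 'I_n -> 'I_n -> H -> H) : 'I_n -> 'I_n -> K -> K :=
  fun i j => phi (x i j).

Definition star_linear : Prop :=
  [/\ forall T, X T -> Y (phi T),
      (forall (a : R[i]) T U, X T -> X U ->
         phi (fun x => a *: T x + U x) = (fun y => a *: phi T y + phi U y)) &
      (forall T S, X T -> X S -> is_sadj ipH epsH T S -> is_sadj ipK epsK (phi T) (phi S))].

Definition unital : Prop := phi id = id.

Definition contractive : Prop :=
  forall T c, X T -> opnorm_le ipH T c -> opnorm_le ipK (phi T) c.

Definition completely_contractive : Prop :=
  forall n x c, mx_in X x -> @mnorm_le _ _ ipH n x c -> mnorm_le ipK (amplify x) c.

Definition superpositive : Prop :=
  forall T, X T -> mx_superpos ipH epsH (fun _ _ : 'I_1 => T) ->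
    mx_superpos ipK epsK (fun _ _ : 'I_1 => phi T).

Definition completely_superpositive : Prop :=
  forall n x, mx_in X x -> @mx_superpos _ _ ipH epsH n x ->
    mx_superpos ipK epsK (amplify x).

Definition cb_le (C : R) : Prop :=
  forall n x c, mx_in X x -> @mnorm_le _ _ ipH n x c -> mnorm_le ipK (amplify x) (C * c).

End Maps.

(* Superpositivity of a hermitian operator matrix x is the condition
   0 <= Re z - Im z, with z = <x v, v>, for every vector v, because
   <iota(x) v, v> = Re z - Im z.

   With beta = 1 + i one has |t v - beta x v|^2 = t^2 |v|^2 + 2 |x v|^2 - 2 t (Re z - Im z).
   So if x is superpositive and |x|^2 <= M, then |t - beta x| <= sqrt (t^2 + 2 M) for all
   t > 0; a unital (completely) contractive map preserves these bounds, and letting t grow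
   forces Re z - Im z >= 0 for the image of x.

   If |x| <= C, the block matrix [[2C, x], [x^*, 2C]] is superpositive: its form is
   2C (|v|^2 + |w|^2) + Re <2 iota(x) w, v> and |2 iota(x)| <= 4 C.  A completely
   superpositive psi keeps it superpositive; as Re - Im of the form of psi(1) is at most
   2 |psi(1)|, this bounds Re <2 iota(psi x) w, v> from below, hence bounds 2 iota(psi x),
   and psi(x) = ((1 - i) 2 iota(psi x) + (1 + i) alpha (2 iota(psi x))) / 4.  This gives
   |psi(x)| <= 4 sqrt 2 |psi(1)| C, and 2 sqrt 2 C when psi is unital. *)

From mathcomp Require Import all_boot all_order all_algebra complex reals boolp.
From mathcomp Require Import ring lra.
Import Order.TTheory GRing.Theory Num.Theory.
Set Implicit Arguments. Unset Strict Implicit. Unset Printing Implicit Defensive.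
Local Open Scope ring_scope.
Local Open Scope complex_scope.
Local Notation Re := complex.Re.
Local Notation Im := complex.Im.

Section InnerProduct.
Variables (R : realType) (H : lmodType R[i]) (ip : H -> H -> R[i]).
Hypothesis hilbH : is_hilbert ip.

Lemma ip_linear a x y z : ip (a *: x + y) z = a * ip x z + ip y z.
Proof. by case: hilbH. Qed.

Lemma ipC x y : ip y x = (ip x y)^*.
Proof. by case: hilbH. Qed.

Lemma ip_self_ge0 x : 0 <= ip x x.
Proof. by case: hilbH. Qed.

Lemma ip0l z : ip 0 z = 0.
Proof.
have := ip_linear 1 0 0 z; rewrite scaler0 addr0 mul1r => h.
by apply/(addrI (ip 0 z)); rewrite addr0 -h.
Qed.

Lemma ipDl x y z : ip (x + y) z = ip x z + ip y z.
Proof. by rewrite -[x]scale1r ip_linear mul1r scale1r. Qed.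

Lemma ipZl a x z : ip (a *: x) z = a * ip x z.
Proof. by rewrite -[a *: x]addr0 ip_linear ip0l addr0. Qed.

Lemma ipNl x z : ip (- x) z = - ip x z.
Proof. by rewrite -scaleN1r ipZl mulN1r. Qed.

Lemma ipDr x y z : ip z (x + y) = ip z x + ip z y.
Proof. by rewrite ipC ipDl (ipC x z) (ipC y z) rmorphD. Qed.

Lemma ipZr a x z : ip z (a *: x) = a^* * ip z x.
Proof. by rewrite ipC ipZl (ipC x z) rmorphM. Qed.

Lemma ipNr x z : ip z (- x) = - ip z x.
Proof. by rewrite -scaleN1r ipZr rmorphN1 mulN1r. Qed.

Lemma ip_suml I (r : seq I) P (F : I -> H) z :
  ip (\sum_(i <- r | P i) F i) z = \sum_(i <- r | P i) ip (F i) z.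
Proof. by elim/big_rec2: _ => [|i a b _ <-]; rewrite ?ip0l // ipDl. Qed.

Lemma Im_ip_self x : Im (ip x x) = 0.
Proof. by have := ip_self_ge0 x; rewrite lecE /= => /andP[/eqP <-]. Qed.

Lemma Re_ip_self_ge0 x : 0 <= Re (ip x x).
Proof. by have := ip_self_ge0 x; rewrite lecE /= => /andP[]. Qed.

Lemma hnorm_sqr x : hnorm ip x ^+ 2 = Re (ip x x).
Proof. by rewrite /hnorm sqr_sqrtr // Re_ip_self_ge0. Qed.

Lemma hnorm_sqr_eq0 x : hnorm ip x ^+ 2 <= 0 -> x = 0.
Proof.
rewrite hnorm_sqr => h; case: hilbH => _ _ _ hd _; apply: hd.
have h0 : Re (ip x x) = 0 by apply/eqP; rewrite eq_le h Re_ip_self_ge0.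
by apply/eqP; rewrite eq_complex h0 Im_ip_self /= !eqxx.
Qed.

Definition vdot n (u v : 'I_n -> H) : R[i] := \sum_i ip (u i) (v i).
Definition vnorm2 n (u : 'I_n -> H) : R := Re (vdot u u).

Section Vectors.
Variable n : nat.
Implicit Types (u v w : 'I_n -> H).

Lemma vdotZl a u w : vdot (fun i => a *: u i) w = a * vdot u w.
Proof. by rewrite /vdot mulr_sumr; apply: eq_bigr => i _; rewrite ipZl. Qed.

Lemma vdotDl u v w : vdot (fun i => u i + v i) w = vdot u w + vdot v w.
Proof. by rewrite /vdot -big_split; apply: eq_bigr => i _; rewrite ipDl. Qed.

Lemma vdotNl u w : vdot (fun i => - u i) w = - vdot u w.
Proof. by rewrite /vdot -sumrN; apply: eq_bigr => i _; rewrite ipNl. Qed.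

Lemma vdotZr a u w : vdot w (fun i => a *: u i) = a^* * vdot w u.
Proof. by rewrite /vdot mulr_sumr; apply: eq_bigr => i _; rewrite ipZr. Qed.

Lemma vdotDr u v w : vdot w (fun i => u i + v i) = vdot w u + vdot w v.
Proof. by rewrite /vdot -big_split; apply: eq_bigr => i _; rewrite ipDr. Qed.

Lemma vdotNr u w : vdot w (fun i => - u i) = - vdot w u.
Proof. by rewrite /vdot -sumrN; apply: eq_bigr => i _; rewrite ipNr. Qed.

Lemma vdotC u w : vdot w u = (vdot u w)^*.
Proof. by rewrite /vdot rmorph_sum; apply: eq_bigr => i _; rewrite ipC. Qed.

Lemma Im_vdot_self u : Im (vdot u u) = 0.
Proof. by rewrite /vdot raddf_sum big1 // => i _; apply: Im_ip_self. Qed.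

Lemma vnorm2E u : vnorm2 u = \sum_i hnorm ip (u i) ^+ 2.
Proof. by rewrite /vnorm2 /vdot raddf_sum; apply: eq_bigr => i _; rewrite hnorm_sqr. Qed.

Lemma vnorm2_ge0 u : 0 <= vnorm2 u.
Proof. by rewrite vnorm2E; apply: sumr_ge0 => i _; apply: sqr_ge0. Qed.

Lemma hnorm_sqr_le_vnorm2 u j : hnorm ip (u j) ^+ 2 <= vnorm2 u.
Proof. by rewrite vnorm2E (bigD1 j) //= lerDl; apply: sumr_ge0 => i _; apply: sqr_ge0. Qed.

Lemma vnorm2_le0 u : vnorm2 u <= 0 -> forall i, u i = 0.
Proof.
move=> h i; apply: hnorm_sqr_eq0; apply: le_trans h.
exact: hnorm_sqr_le_vnorm2.
Qed.

Lemma vnorm2Z a u : vnorm2 (fun i => a *: u i) = (Re a ^+ 2 + Im a ^+ 2) * vnorm2 u.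
Proof.
rewrite /vnorm2 vdotZl vdotZr mulrA; have := Im_vdot_self u.
by case: a => a1 a2; case: (vdot u u) => u1 u2 /= ->; simpc => /=; ring.
Qed.

Lemma vnorm2Zr (t : R) u : vnorm2 (fun i => t%:C *: u i) = t ^+ 2 * vnorm2 u.
Proof. by rewrite vnorm2Z /= expr0n /= addr0. Qed.

Lemma vnorm2N u : vnorm2 (fun i => - u i) = vnorm2 u.
Proof. by rewrite /vnorm2 vdotNl vdotNr opprK. Qed.

Lemma vnorm2D u w : vnorm2 (fun i => u i + w i) = vnorm2 u + vnorm2 w + 2 * Re (vdot u w).
Proof.
rewrite /vnorm2 vdotDl !vdotDr (vdotC u w) !raddfD /=.
by case: (vdot u w) => a b /=; ring.
Qed.

Lemma vnorm2B u w : vnorm2 (fun i => u i - w i) = vnorm2 u + vnorm2 w - 2 * Re (vdot u w).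
Proof. by rewrite vnorm2D vnorm2N vdotNr raddfN /=; ring. Qed.

Lemma vnorm2D_le u w : vnorm2 (fun i => u i + w i) <= 2 * vnorm2 u + 2 * vnorm2 w.
Proof. have := vnorm2_ge0 (fun i => u i - w i); rewrite vnorm2B vnorm2D; lra. Qed.

Lemma Re_vdot_le u w (s : R) : 0 < s ->
  2 * Re (vdot u w) <= s * vnorm2 u + s^-1 * vnorm2 w.
Proof.
move=> s0; have := vnorm2_ge0 (fun i => s%:C *: u i - w i).
rewrite vnorm2B vnorm2Zr vdotZl.
have -> : Re (s%:C * vdot u w) = s * Re (vdot u w) by case: (vdot u w) => a b; simpc.
move=> h; have si : 0 < s^-1 by rewrite invr_gt0.
have := mulr_ge0 (ltW si) h.
have -> : s^-1 * (s ^+ 2 * vnorm2 u + vnorm2 w - 2 * (s * Re (vdot u w))) =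
   s * vnorm2 u + s^-1 * vnorm2 w - 2 * Re (vdot u w) by field; rewrite gt_eqF.
lra.
Qed.

Lemma Re_vdot_le_of_vnorm2 u v w (m : R) : 0 <= m ->
  vnorm2 u <= m ^+ 2 * vnorm2 w -> Re (vdot u v) <= m / 2 * (vnorm2 v + vnorm2 w).
Proof.
move=> m0 hu; have [m00 | mn0] := eqVneq m 0.
  move: hu; rewrite m00 expr0n mul0r => /vnorm2_le0 u0.
  by rewrite /vdot big1 ?mul0r // => i _; rewrite u0 ip0l.
have mp : 0 < m by rewrite lt_def mn0.
have mi : 0 < m^-1 by rewrite invr_gt0.
have := Re_vdot_le u v mi; rewrite invrK.
have : m^-1 * vnorm2 u <= m^-1 * (m ^+ 2 * vnorm2 w) by rewrite ler_pM2l.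
have -> : m^-1 * (m ^+ 2 * vnorm2 w) = m * vnorm2 w by field.
have := vnorm2_ge0 v; have := vnorm2_ge0 w.
have -> : m / 2 * (vnorm2 v + vnorm2 w) = (m * vnorm2 v + m * vnorm2 w) / 2 by field.
lra.
Qed.

Lemma vnorm2_le_of_Re_vdot u w (k : R) : 0 <= k ->
  (forall v, - (k * (vnorm2 v + vnorm2 w)) <= Re (vdot u v)) ->
  vnorm2 u <= 4 * k ^+ 2 * vnorm2 w.
Proof.
move=> k0 hu.
have key s : 0 < s -> s * vnorm2 u <= k * (s ^+ 2 * vnorm2 u + vnorm2 w).
  move=> s0; have := hu (fun i => (- s)%:C *: u i).
  rewrite vnorm2Zr sqrrN vdotZr.
  have -> : Re ((- s)%:C^* * vdot u u) = - s * vnorm2 u.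
    by rewrite /vnorm2; case: (vdot u u) => a b; simpc.
  lra.
have hu0 := vnorm2_ge0 u; have hw0 := vnorm2_ge0 w.
have [k00 | kn0] := eqVneq k 0.
  by have := key 1 ltr01; rewrite k00 expr2 !(mul0r, mulr0, mul1r); lra.
have kp : 0 < k by rewrite lt_def kn0.
have s0 : 0 < (2 * k)^-1 by rewrite invr_gt0 mulr_gt0.
(* the optimal choice s = 1 / (2 k) *)
have := key _ s0.
have -> : k * ((2 * k)^-1 ^+ 2 * vnorm2 u + vnorm2 w) =
          (2 * k)^-1 * vnorm2 u / 2 + k * vnorm2 w by field.
move=> h; have {h} : (2 * k)^-1 * vnorm2 u <= 2 * k * vnorm2 w by lra.
rewrite -(ler_pM2l (mulr_gt0 (ltr0Sn _ 1) kp)) mulrA mulfV ?mul1r; last first.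
  by rewrite mulf_neq0 // pnatr_eq0.
by congr (_ <= _); rewrite expr2; ring.
Qed.

Definition sform (u v : 'I_n -> H) : R := Re (vdot u v) - Im (vdot u v).

Lemma sform_self v : sform v v = vnorm2 v.
Proof. by rewrite /sform Im_vdot_self subr0. Qed.

Lemma sform_le u v (d : R) : 0 <= d ->
  vnorm2 u <= d ^+ 2 * vnorm2 v -> sform u v <= 2 * d * vnorm2 v.
Proof.
move=> d0 hu; have hRe := Re_vdot_le_of_vnorm2 v d0 hu.
have := Re_vdot_le_of_vnorm2 (fun i => (- 'i) *: v i) d0 hu.
rewrite vdotZr vnorm2Z.
have -> : Re ((- 'i)^* * vdot u v) = - Im (vdot u v).
  by case: (vdot u v) => a b; simpc.
rewrite (_ : Re (- 'i : R[i]) ^+ 2 + Im (- 'i : R[i]) ^+ 2 = 1) ?mul1r; last first.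
  by simpc => /=; ring.
rewrite /sform; move: hRe; have := vnorm2_ge0 v; lra.
Qed.

Lemma Re2_Im2_1pi : Re (1 + 'i : R[i]) ^+ 2 + Im (1 + 'i : R[i]) ^+ 2 = 2.
Proof. by simpc => /=; ring. Qed.

Lemma Re2_Im2_1mi : Re (1 - 'i : R[i]) ^+ 2 + Im (1 - 'i : R[i]) ^+ 2 = 2.
Proof. by simpc => /=; ring. Qed.

Lemma vnorm2_shift (t : R) u v :
  vnorm2 (fun i => t%:C *: v i - (1 + 'i) *: u i) =
  t ^+ 2 * vnorm2 v + 2 * vnorm2 u - 2 * t * sform u v.
Proof.
rewrite vnorm2B vnorm2Zr vnorm2Z vdotZl vdotZr (vdotC u v) /sform.
rewrite Re2_Im2_1pi.
by case: (vdot u v) => a b; simpc => /=; ring.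
Qed.

Lemma vnorm2_shift_le (t M : R) u v : 0 <= t ->
  vnorm2 u <= M * vnorm2 v -> 0 <= sform u v ->
  vnorm2 (fun i => t%:C *: v i - (1 + 'i) *: u i) <= (t ^+ 2 + 2 * M) * vnorm2 v.
Proof. by rewrite vnorm2_shift => t0 hu hs; nra. Qed.

Lemma sform_ge0_of_shift (M : R) u v : 0 <= M ->
  (forall t : R, 0 < t ->
     vnorm2 (fun i => t%:C *: v i - (1 + 'i) *: u i) <= (t ^+ 2 + 2 * M) * vnorm2 v) ->
  0 <= sform u v.
Proof.
move=> M0 hshift; rewrite leNgt; apply/negP => sneg.
have hv := vnorm2_ge0 v; have hu := vnorm2_ge0 u.
have tp : 0 < (M * vnorm2 v + 1) / - sform u v.
  by apply: divr_gt0; [have := mulr_ge0 M0 hv; lra | lra].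
have := hshift _ tp; rewrite vnorm2_shift.
have -> : 2 * ((M * vnorm2 v + 1) / - sform u v) * sform u v = - 2 * (M * vnorm2 v + 1).
  by field; rewrite lt_eqF.
lra.
Qed.

End Vectors.

(* The conjugate is passed as an equation: rewriting right to left with a literal z^*
   fails to match in [vdot_iota]. *)
Lemma Re_sub_ImE (z w : R[i]) : w = z^* ->
  2^-1 * (z + w) + ('i * 2^-1) * (z - w) = (Re z - Im z)%:C.
Proof.
move=> ->; have -> : (2^-1 : R[i]) = (2^-1 : R)%:C by rewrite fmorphV /= rmorph_nat.
by case: z => a b; simpc => /=; congr (_ +i* _); field.
Qed.

Lemma vdot_iota eps n (y : 'I_n -> 'I_n -> H -> H) v : mx_herm ip eps y ->
  vdot (mx_apply (fun i j => giota eps (y i j)) v) v = (sform (mx_apply y v) v)%:C.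
Proof.
move=> hy.
have yE : vdot (mx_apply y v) v = \sum_i \sum_j ip (y i j (v j)) (v i).
  by rewrite /vdot /mx_apply; apply: eq_bigr => i _; rewrite ip_suml.
have alphaE : \sum_i \sum_j ip (eps (y i j (eps (v j)))) (v i) = (vdot (mx_apply y v) v)^*.
  rewrite yE rmorph_sum; under [RHS]eq_bigr do rewrite rmorph_sum.
  rewrite [RHS]exchange_big /=; apply: eq_bigr => i _; apply: eq_bigr => j _.
  by rewrite (hy i j) [LHS]ipC.
rewrite /sform -(Re_sub_ImE alphaE) yE -big_split -sumrB !mulr_sumr -big_split /=.
rewrite /vdot /mx_apply; apply: eq_bigr => i _.
rewrite ip_suml -big_split -sumrB !mulr_sumr -big_split /=.
by apply: eq_bigr => j _; rewrite /giota /galpha ipDl !ipZl ipDl ipDl ipNl.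
Qed.

Lemma mx_pos_iotaP eps n (y : 'I_n -> 'I_n -> H -> H) : mx_herm ip eps y ->
  mx_pos ip (fun i j => giota eps (y i j)) <-> forall v, 0 <= sform (mx_apply y v) v.
Proof.
move=> hy; split=> h v; have := h v; rewrite -/(vdot _ _) vdot_iota //.
  by rewrite ler0c.
by rewrite ler0c.
Qed.

Lemma mnorm_leP n (x : 'I_n -> 'I_n -> H -> H) c : mnorm_le ip x c <->
  0 <= c /\ forall u, vnorm2 (mx_apply x u) <= c ^+ 2 * vnorm2 u.
Proof. by split=> -[c0 hx]; split=> // u; move: (hx u); rewrite !vnorm2E. Qed.

Lemma mnorm_le1 (x : 'I_1 -> 'I_1 -> H -> H) c :
  mnorm_le ip x c <-> opnorm_le ip (x ord0 ord0) c.
Proof.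
have xE v : mx_apply x v ord0 = x ord0 ord0 (v ord0) by rewrite /mx_apply big_ord1.
split=> -[c0 hx]; split=> // h.
  have := hx (fun _ => h); rewrite !big_ord1 xE -exprMn.
  by rewrite ler_sqr // nnegrE ?mulr_ge0 //; apply: sqrtr_ge0.
rewrite !big_ord1 xE -exprMn !expr2.
by apply: ler_pM => //; apply: sqrtr_ge0.
Qed.

Lemma vnorm2_opnorm_le n (T : H -> H) c (u : 'I_n -> H) :
  opnorm_le ip T c -> vnorm2 (fun i => T (u i)) <= c ^+ 2 * vnorm2 u.
Proof.
case=> c0 hT; rewrite !vnorm2E mulr_sumr; apply: ler_sum => i _.
by rewrite -exprMn !expr2; apply: ler_pM => //; apply: sqrtr_ge0.
Qed.

Lemma hnorm_sqrD_le x y :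
  hnorm ip (x + y) ^+ 2 <= 2 * hnorm ip x ^+ 2 + 2 * hnorm ip y ^+ 2.
Proof. by have := vnorm2D_le (fun _ : 'I_1 => x) (fun _ => y); rewrite !vnorm2E !big_ord1. Qed.

Lemma hnorm_sqr_sum_le m (F : 'I_m -> H) :
  hnorm ip (\sum_j F j) ^+ 2 <= 2 ^+ m * \sum_j hnorm ip (F j) ^+ 2.
Proof.
elim: m F => [|m ih] F; first by rewrite !big_ord0 hnorm_sqr ip0l mulr0.
rewrite !big_ord_recl; apply: (le_trans (hnorm_sqrD_le _ _)).
have := ih (fun j => F (lift ord0 j)); have := sqr_ge0 (hnorm ip (F ord0)).
have : 0 <= \sum_(j < m) hnorm ip (F (lift ord0 j)) ^+ 2.
  by apply: sumr_ge0 => j _; apply: sqr_ge0.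
have : 1 <= 2 ^+ m :> R by rewrite exprn_ege1 // ler1n.
rewrite [_ ^+ m.+1]exprS; nra.
Qed.

Lemma bop_sqr_bounded T : bop ip T ->
  exists M, 0 <= M /\ forall h, hnorm ip (T h) ^+ 2 <= M * hnorm ip h ^+ 2.
Proof.
case=> _ [M hM] _; exists (M ^+ 2); split=> [|h]; first exact: sqr_ge0.
rewrite -exprMn !expr2; apply: ler_pM => //; apply: sqrtr_ge0.
Qed.

Lemma mx_apply_bounded n (x : 'I_n -> 'I_n -> H -> H) : (forall i j, bop ip (x i j)) ->
  exists M, 0 <= M /\ forall u, vnorm2 (mx_apply x u) <= M * vnorm2 u.
Proof.
move=> hx; have [M hM] := choice (fun ij : 'I_n * 'I_n => bop_sqr_bounded (hx ij.1 ij.2)).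
have M0 i j : 0 <= M (i, j) by case: (hM (i, j)).
exists (2 ^+ n * \sum_i \sum_j M (i, j)); split.
  by rewrite mulr_ge0 ?exprn_ge0 //; do 2!apply: sumr_ge0 => ? _.
move=> u; rewrite vnorm2E /mx_apply -mulrA mulr_suml mulr_sumr.
apply: ler_sum => i _; apply: (le_trans (hnorm_sqr_sum_le _)).
rewrite mulr_suml ler_pM2l ?exprn_gt0 //; apply: ler_sum => j _.
have [_ /(_ (u j)) hij] := hM (i, j); apply: (le_trans hij).
by rewrite ler_wpM2l // hnorm_sqr_le_vnorm2.
Qed.

Lemma mx_apply_comb n a (x y : 'I_n -> 'I_n -> H -> H) u :
  mx_apply (fun i j h => a *: x i j h + y i j h) u =
  (fun i => a *: mx_apply x u i + mx_apply y u i).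
Proof. by apply: funext => i; rewrite /mx_apply big_split /= scaler_sumr. Qed.

Definition diag_op n (k : R[i]) (P : H -> H) (a b : 'I_n) : H -> H :=
  fun h => (if a == b then k else 0) *: P h.

Lemma mx_apply_diag n k P (u : 'I_n -> H) :
  mx_apply (diag_op k P) u = (fun i => k *: P (u i)).
Proof.
apply: funext => i; rewrite /mx_apply (bigD1 i) //= big1 => [|j ji].
  by rewrite /diag_op eqxx addr0.
by rewrite /diag_op eq_sym (negbTE ji) scale0r.
Qed.

End InnerProduct.

Section Grading.
Variables (R : realType) (H : lmodType R[i]) (ip : H -> H -> R[i]) (eps : H -> H).
Hypotheses (hilbH : is_hilbert ip) (gradH : is_grading ip eps).

Lemma eps_linear a x y : eps (a *: x + y) = a *: eps x + eps y.
Proof. by case: gradH. Qed.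

Lemma eps_adj x y : ip (eps x) y = ip x (eps y).
Proof. by case: gradH. Qed.

Lemma epsK x : eps (eps x) = x.
Proof. by case: gradH. Qed.

Lemma eps0 : eps 0 = 0.
Proof.
have := eps_linear 1 0 0; rewrite scaler0 addr0 scale1r => h.
by apply/(addrI (eps 0)); rewrite addr0 -h.
Qed.

Lemma epsD x y : eps (x + y) = eps x + eps y.
Proof. by rewrite -[x]scale1r eps_linear !scale1r. Qed.

Lemma epsZ a x : eps (a *: x) = a *: eps x.
Proof. by rewrite -[a *: x]addr0 eps_linear eps0 addr0. Qed.

Lemma eps_sum I (r : seq I) (F : I -> H) :
  eps (\sum_(i <- r) F i) = \sum_(i <- r) eps (F i).
Proof. by elim/big_rec2: _ => [|i x y _ <-]; rewrite ?eps0 // epsD. Qed.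

Lemma ip_eps x y : ip (eps x) (eps y) = ip x y.
Proof. by rewrite eps_adj epsK. Qed.

Lemma vnorm2_eps n (u : 'I_n -> H) : vnorm2 ip (fun i => eps (u i)) = vnorm2 ip u.
Proof. by rewrite /vnorm2 /vdot; congr Re; apply: eq_bigr => i _; rewrite ip_eps. Qed.

Lemma is_sadj_sym T S : is_sadj ip eps T S -> is_sadj ip eps S T.
Proof.
move=> hTS u w; rewrite -eps_adj (ipC hilbH (T (eps w))) hTS epsK ip_eps.
exact: ipC.
Qed.

(* (1 + i) B + (1 - i) alpha(B) = 2 iota(B) for any map B on H^n, where
   alpha(B) w = eps (B (eps w)). *)
Definition iota2 n (B : ('I_n -> H) -> 'I_n -> H) (w : 'I_n -> H) : 'I_n -> H :=
  fun i => (1 + 'i) *: B w i + (1 - 'i) *: eps (B (fun j => eps (w j)) i).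

Lemma vnorm2_iota2_le n (B : ('I_n -> H) -> 'I_n -> H) (C : R) :
  (forall u, vnorm2 ip (B u) <= C ^+ 2 * vnorm2 ip u) ->
  forall w, vnorm2 ip (iota2 B w) <= (4 * C) ^+ 2 * vnorm2 ip w.
Proof.
move=> hB w; apply: (le_trans (vnorm2D_le hilbH _ _)); rewrite !(vnorm2Z hilbH).
rewrite Re2_Im2_1pi Re2_Im2_1mi.
rewrite vnorm2_eps; have := hB (fun j => eps (w j)); rewrite vnorm2_eps.
have := hB w; have := vnorm2_ge0 hilbH w; have := sqr_ge0 C.
rewrite (expr2 (4 * C)) expr2; nra.
Qed.

Lemma vnorm2_le_of_iota2 n (B : ('I_n -> H) -> 'I_n -> H) (k : R) : 0 <= k ->
  (forall w v, - (k * (vnorm2 ip v + vnorm2 ip w)) <= Re (vdot ip (iota2 B w) v)) ->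
  forall w, vnorm2 ip (B w) <= 2 * k ^+ 2 * vnorm2 ip w.
Proof.
move=> k0 hB w.
have hG w' : vnorm2 ip (iota2 B w') <= 4 * k ^+ 2 * vnorm2 ip w'.
  exact: vnorm2_le_of_Re_vdot.
pose G' i := eps (iota2 B (fun j => eps (w j)) i).
have hG' : vnorm2 ip G' <= 4 * k ^+ 2 * vnorm2 ip w.
  by rewrite /G' vnorm2_eps -(vnorm2_eps w); apply: hG.
(* (1 - i) iota2 B + (1 + i) alpha (iota2 B) = 4 B *)
have BE : (fun i => 4%:C *: B w i) = (fun i => (1 - 'i) *: iota2 B w i + (1 + 'i) *: G' i).
  apply: funext => i; rewrite /G' /iota2 epsD !epsZ epsK.
  rewrite (_ : (fun j => eps (eps (w j))) = w); last by apply: funext => j; rewrite epsK.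
  rewrite !scalerDr !scalerA [X in _ + X]addrC addrACA -!scalerDl.
  rewrite (_ : (1 - 'i) * (1 + 'i) + (1 + 'i) * (1 - 'i) = 4%:C); last first.
    by apply/eqP; rewrite eq_complex /=; apply/andP; split; apply/eqP; ring.
  rewrite (_ : (1 - 'i) * (1 - 'i) + (1 + 'i) * (1 + 'i) = 0 :> R[i]); last first.
    by apply/eqP; rewrite eq_complex /=; apply/andP; split; apply/eqP; ring.
  by rewrite scale0r addr0.
have := vnorm2D_le hilbH (fun i => (1 - 'i) *: iota2 B w i) (fun i => (1 + 'i) *: G' i).
rewrite -BE !(vnorm2Z hilbH) /=.
rewrite Re2_Im2_1pi Re2_Im2_1mi.
have := hG w; have := vnorm2_ge0 hilbH (B w).
rewrite expr0n /= addr0 (_ : (4 : R) ^+ 2 = 16); last by rewrite expr2; ring.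
lra.
Qed.

Definition vcat n (v w : 'I_n -> H) : 'I_(n + n) -> H :=
  fun i => match split i with inl a => v a | inr b => w b end.

Lemma vcat_split n (u : 'I_(n + n) -> H) :
  vcat (fun a => u (lshift n a)) (fun b => u (rshift n b)) = u.
Proof. by apply: funext => i; rewrite /vcat; case: (split i) (splitK i) => a <-. Qed.

Lemma vdot_vcat n (u u' v w : 'I_n -> H) :
  vdot ip (vcat u u') (vcat v w) = vdot ip u v + vdot ip u' w.
Proof.
by rewrite /vdot big_split_ord /=; congr (_ + _); apply: eq_bigr => a _;
  rewrite /vcat ?(@unsplitK n n (inl a)) ?(@unsplitK n n (inr a)).
Qed.

(* The block matrix [[c P, y], [t, c P]]; hermitian when t is the transpose-adjoint of y. *)
Definition hblock n (c : R) (P : H -> H) (y t : 'I_n -> 'I_n -> H -> H) :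
    'I_(n + n) -> 'I_(n + n) -> H -> H :=
  fun i j => match split i, split j with
  | inl a, inl b | inr a, inr b => diag_op c%:C P a b
  | inl a, inr b => y a b
  | inr b, inl a => t b a
  end.

Lemma mx_apply_hblock n c P (y t : 'I_n -> 'I_n -> H -> H) v w :
  mx_apply (hblock c P y t) (vcat v w) =
  vcat (fun a => c%:C *: P (v a) + mx_apply y w a)
       (fun b => mx_apply t v b + c%:C *: P (w b)).
Proof.
have lK a : split (lshift n a) = inl a := @unsplitK n n (inl a).
have rK b : split (rshift n b) = inr b := @unsplitK n n (inr b).
rewrite -[LHS]vcat_split; congr vcat; apply: funext => a.
- have := congr1 (fun f => f a) (mx_apply_diag c%:C P v) => /= <-.
  rewrite /mx_apply big_split_ord /=; congr (_ + _); apply: eq_bigr => b _.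
    by rewrite /hblock /vcat !lK.
  by rewrite /hblock /vcat lK !rK.
- have := congr1 (fun f => f a) (mx_apply_diag c%:C P w) => /= <-.
  rewrite /mx_apply big_split_ord /=; congr (_ + _); apply: eq_bigr => b _.
    by rewrite /hblock /vcat rK !lK.
  by rewrite /hblock /vcat !rK.
Qed.

Lemma sform_hblock n c P (y t : 'I_n -> 'I_n -> H -> H) v w :
  (forall a b, is_sadj ip eps (t b a) (y a b)) ->
  sform ip (mx_apply (hblock c P y t) (vcat v w)) (vcat v w) =
  c * sform ip (fun a => P (v a)) v + c * sform ip (fun b => P (w b)) w
  + Re (vdot ip (iota2 (mx_apply y) w) v).
Proof.
move=> hty; set q := vdot ip (fun a => eps (mx_apply y (fun j => eps (w j)) a)) v.
have tE : vdot ip (mx_apply t v) w = q^*.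
  rewrite /q /vdot rmorph_sum /mx_apply; under eq_bigr do rewrite ip_suml //.
  rewrite exchange_big /=; apply: eq_bigr => b _.
  rewrite eps_sum (ip_suml hilbH) rmorph_sum; apply: eq_bigr => a _.
  by rewrite (hty b a) [LHS](ipC hilbH).
have iE : vdot ip (iota2 (mx_apply y) w) v = (1 + 'i) * vdot ip (mx_apply y w) v + (1 - 'i) * q.
  by rewrite /iota2 (vdotDl hilbH) !(vdotZl hilbH).
rewrite iE mx_apply_hblock /sform vdot_vcat !(vdotDl hilbH) !(vdotZl hilbH) tE.
clear tE iE; move: (vdot ip (fun a => P (v a)) v) (vdot ip (fun b => P (w b)) w).
move: (vdot ip (mx_apply y w) v) q => [p1 p2] [q1 q2] [a1 a2] [b1 b2].
by simpc => /=; ring.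
Qed.

Lemma hblock_herm n (c : R) (y t : 'I_n -> 'I_n -> H -> H) :
  (forall a b, is_sadj ip eps (t b a) (y a b)) -> mx_herm ip eps (hblock c id y t).
Proof.
have diag_herm a b : is_sadj ip eps (@diag_op _ _ n c%:C id b a) (diag_op c%:C id a b).
  move=> u v; rewrite /diag_op eq_sym epsZ epsK (ipZl hilbH) (ipZr hilbH).
  by congr (_ * _); case: (a == b); [exact/esym/conjc_real | exact/esym/conjc0].
move=> hty i j; rewrite /hblock.
by case: (split i) => a; case: (split j) => b //; apply: is_sadj_sym.
Qed.

Lemma hblock_superpos n (x t : 'I_n -> 'I_n -> H -> H) (C : R) :
  mnorm_le ip x C -> (forall a b, is_sadj ip eps (t b a) (x a b)) ->
  mx_superpos ip eps (hblock (2 * C) id x t).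
Proof.
move=> /(mnorm_leP hilbH) [C0 hx] hty; have herm := hblock_herm (2 * C) hty.
split=> //; apply/(mx_pos_iotaP hilbH herm) => u; rewrite -(vcat_split u).
move: (fun a => u (lshift n a)) (fun b => u (rshift n b)) => v w.
rewrite sform_hblock // !(sform_self hilbH).
have := Re_vdot_le_of_vnorm2 hilbH (fun i => - v i) (mulr_ge0 (ler0n _ 4) C0)
  (vnorm2_iota2_le hx w).
rewrite (vdotNr hilbH) raddfN /= (vnorm2N hilbH).
have := vnorm2_ge0 hilbH v; have := vnorm2_ge0 hilbH w; nra.
Qed.

End Grading.

Section SuperOperatorSystem.
Variables (R : realType) (H : lmodType R[i]) (ip : H -> H -> R[i]) (eps : H -> H)
  (X : (H -> H) -> Prop).
Hypothesis opsysX : super_opsys ip eps X.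

Lemma opsys_bop T : X T -> bop ip T.
Proof. by case: opsysX => h _ _ _ _; apply: h. Qed.

Lemma opsys_id : X id.
Proof. by case: opsysX. Qed.

Lemma opsys_comb a T U : X T -> X U -> X (fun h => a *: T h + U h).
Proof. by case: opsysX => _ _ h _ _; apply: h. Qed.

Lemma opsys_adj T : X T -> exists S, X S /\ is_sadj ip eps T S.
Proof. by case: opsysX => _ _ _ _ h; apply: h. Qed.

Lemma opsys0 : X (fun _ => 0).
Proof.
have -> : (fun _ : H => 0) = (fun h => (-1) *: id h + id h).
  by apply: funext => h; rewrite scaleN1r addNr.
by apply: opsys_comb; apply: opsys_id.
Qed.

Lemma opsys_diag n k (a b : 'I_n) : X (diag_op k id a b).
Proof.
have -> : @diag_op _ H n k id a b = (fun h => (if a == b then k else 0) *: id h + 0).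
  by apply: funext => h; rewrite addr0.
by apply: opsys_comb; [apply: opsys_id | apply: opsys0].
Qed.

End SuperOperatorSystem.

Section StarLinearMaps.
Variables (R : realType) (H K : lmodType R[i]) (ipH : H -> H -> R[i]) (ipK : K -> K -> R[i])
  (epsH : H -> H) (epsK : K -> K) (X : (H -> H) -> Prop) (Y : (K -> K) -> Prop)
  (phi : (H -> H) -> (K -> K)).
Hypotheses (opsysX : super_opsys ipH epsH X) (linphi : star_linear ipH ipK epsH epsK X Y phi).

Lemma star_linear_comb a T U : X T -> X U ->
  phi (fun h => a *: T h + U h) = (fun y => a *: phi T y + phi U y).
Proof. by case: linphi => _ h _; apply: h. Qed.

Lemma star_linear_sadj T S : X T -> X S ->
  is_sadj ipH epsH T S -> is_sadj ipK epsK (phi T) (phi S).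
Proof. by case: linphi => _ _ h; apply: h. Qed.

Lemma star_linear0 : phi (fun _ => 0) = (fun _ => 0).
Proof.
have -> : (fun _ : H => 0) = (fun h => (-1) *: id h + id h).
  by apply: funext => h; rewrite scaleN1r addNr.
rewrite star_linear_comb; try exact: (opsys_id opsysX).
by apply: funext => y; rewrite scaleN1r addNr.
Qed.

Lemma star_linear_diag n k (a b : 'I_n) : phi (diag_op k id a b) = diag_op k (phi id) a b.
Proof.
have -> : @diag_op _ H n k id a b = (fun h => (if a == b then k else 0) *: id h + 0).
  by apply: funext => h; rewrite addr0.
rewrite star_linear_comb ?star_linear0; [|exact: (opsys_id opsysX) | exact: (opsys0 opsysX)].
by apply: funext => y; rewrite addr0.
Qed.

Lemma amplify_herm n (x : 'I_n -> 'I_n -> H -> H) :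
  mx_in X x -> mx_herm ipH epsH x -> mx_herm ipK epsK (amplify phi x).
Proof. by move=> hx herm i j; apply: star_linear_sadj. Qed.

End StarLinearMaps.

Section Superpositivity.
Variables (R : realType) (H K : lmodType R[i]) (ipH : H -> H -> R[i]) (ipK : K -> K -> R[i])
  (epsH : H -> H) (epsK : K -> K) (X : (H -> H) -> Prop) (Y : (K -> K) -> Prop)
  (phi : (H -> H) -> (K -> K)).
Hypotheses (hilbH : is_hilbert ipH) (hilbK : is_hilbert ipK)
  (gradH : is_grading ipH epsH) (gradK : is_grading ipK epsK)
  (opsysX : super_opsys ipH epsH X) (linphi : star_linear ipH ipK epsH epsK X Y phi).

Lemma superpos_amplify_of_contractive n (x : 'I_n -> 'I_n -> H -> H) :
  unital phi ->
  (forall (m : 'I_n -> 'I_n -> H -> H) c,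
     mx_in X m -> mnorm_le ipH m c -> mnorm_le ipK (amplify phi m) c) ->
  mx_in X x -> mx_superpos ipH epsH x -> mx_superpos ipK epsK (amplify phi x).
Proof.
move=> unit_phi contr hx [herm pos]; have hermK := amplify_herm linphi hx herm.
split=> //; apply/(mx_pos_iotaP hilbK hermK) => v.
move/(mx_pos_iotaP hilbH herm): pos => pos.
have [M [M0 hM]] := mx_apply_bounded hilbH (fun i j => opsys_bop opsysX (hx i j)).
apply: (sform_ge0_of_shift hilbK M0) => t t0.
pose xt i j h := (- (1 + 'i)) *: x i j h + diag_op t%:C id i j h.
have xtX : mx_in X xt.
  by move=> i j; apply: (opsys_comb opsysX); [exact: hx | exact: (opsys_diag opsysX)].
have xtE u : mx_apply xt u = (fun i => t%:C *: u i - (1 + 'i) *: mx_apply x u i).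
  by rewrite mx_apply_comb mx_apply_diag; apply: funext => i; rewrite scaleNr addrC.
have xtE' w : mx_apply (amplify phi xt) w =
    (fun i => t%:C *: w i - (1 + 'i) *: mx_apply (amplify phi x) w i).
  have -> : amplify phi xt =
      (fun i j y => (- (1 + 'i)) *: amplify phi x i j y + diag_op t%:C (phi id) i j y).
    apply: funext => i; apply: funext => j.
    rewrite /amplify /xt (star_linear_comb linphi) ?(star_linear_diag opsysX linphi) //.
    exact: (opsys_diag opsysX).
  rewrite mx_apply_comb mx_apply_diag unit_phi.
  by apply: funext => i; rewrite scaleNr addrC.
have c2 : Num.sqrt (t ^+ 2 + 2 * M) ^+ 2 = t ^+ 2 + 2 * M.
  by rewrite sqr_sqrtr // addr_ge0 ?sqr_ge0 ?mulr_ge0.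
have /(contr _ _ xtX) /(mnorm_leP hilbK) [_ /(_ v)] : mnorm_le ipH xt (Num.sqrt (t ^+ 2 + 2 * M)).
  apply/(mnorm_leP hilbH); split=> [|u]; first exact: sqrtr_ge0.
  by rewrite xtE c2; apply: vnorm2_shift_le (ltW t0) (hM u) (pos u).
by rewrite xtE' c2.
Qed.

Lemma vnorm2_amplify_le (e : R) : 0 <= e ->
  completely_superpositive ipH ipK epsH epsK X phi ->
  (forall n (v : 'I_n -> K), sform ipK (fun a => phi id (v a)) v <= e * vnorm2 ipK v) ->
  forall n (x : 'I_n -> 'I_n -> H -> H) C, mx_in X x -> mnorm_le ipH x C ->
  forall w, vnorm2 ipK (mx_apply (amplify phi x) w) <= 8 * C ^+ 2 * e ^+ 2 * vnorm2 ipK w.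
Proof.
move=> e0 csp he n x C hx hxC; have C0 : 0 <= C by case: hxC.
have [t ht] := choice (fun ab : 'I_n * 'I_n => opsys_adj opsysX (hx ab.1 ab.2)).
pose xs b a := t (a, b).
have xsX : mx_in X xs by move=> b a; case: (ht (a, b)).
have hxs a b : is_sadj ipH epsH (xs b a) (x a b).
  by apply: (is_sadj_sym hilbH gradH); case: (ht (a, b)).
have zX : mx_in X (hblock (2 * C) id x xs).
  move=> i j; rewrite /hblock.
  by case: (split i) => a; case: (split j) => b //; exact: (opsys_diag opsysX).
have [hermK posK] := csp _ _ zX (hblock_superpos hilbH gradH hxC hxs).
have zE : amplify phi (hblock (2 * C) id x xs) =
    hblock (2 * C) (phi id) (amplify phi x) (amplify phi xs).
  apply: funext => i; apply: funext => j; rewrite /amplify /hblock.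
  by case: (split i) => a; case: (split j) => b //; exact: (star_linear_diag opsysX linphi).
rewrite zE in hermK posK.
have hxsK a b : is_sadj ipK epsK (amplify phi xs b a) (amplify phi x a b).
  exact: (star_linear_sadj linphi (xsX b a) (hx a b) (hxs a b)).
have key w v : - (2 * C * e * (vnorm2 ipK v + vnorm2 ipK w)) <=
    Re (vdot ipK (iota2 epsK (mx_apply (amplify phi x)) w) v).
  have := (mx_pos_iotaP hilbK hermK).1 posK (vcat v w).
  rewrite (sform_hblock hilbK gradK) //.
  have := ler_wpM2l (mulr_ge0 (ler0n _ 2) C0) (he _ v).
  have := ler_wpM2l (mulr_ge0 (ler0n _ 2) C0) (he _ w).
  rewrite !mulrA; lra.
move=> w; apply: (le_trans (vnorm2_le_of_iota2 hilbK gradK _ key w)).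
  by rewrite !mulr_ge0.
by rewrite !exprMn (_ : 2 ^+ 2 = 4 :> R) ?mulrA; [lra | rewrite expr2; ring].
Qed.

Lemma cb_le_of_sform_le (e : R) : 0 <= e ->
  completely_superpositive ipH ipK epsH epsK X phi ->
  (forall n (v : 'I_n -> K), sform ipK (fun a => phi id (v a)) v <= e * vnorm2 ipK v) ->
  cb_le ipH ipK X phi (4 * e).
Proof.
move=> e0 csp he n x C hx hxC; have C0 : 0 <= C by case: hxC.
apply/(mnorm_leP hilbK); split=> [|w]; first by rewrite !mulr_ge0.
apply: (le_trans (vnorm2_amplify_le e0 csp he hx hxC w)).
rewrite ler_wpM2r ?vnorm2_ge0 // !exprMn (_ : 4 ^+ 2 = 16 :> R); last by rewrite expr2; ring.
have := mulr_ge0 (sqr_ge0 e) (sqr_ge0 C); nra.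
Qed.

End Superpositivity.

Theorem proposition3 (R : realType) (H K : lmodType R[i])
  (ipH : H -> H -> R[i]) (ipK : K -> K -> R[i]) (epsH : H -> H) (epsK : K -> K)
  (X : (H -> H) -> Prop) (Y : (K -> K) -> Prop) :
  is_hilbert ipH -> is_hilbert ipK ->
  is_grading ipH epsH -> is_grading ipK epsK ->
  super_opsys ipH epsH X -> super_opsys ipK epsK Y ->
  [/\ (forall phi : (H -> H) -> (K -> K),
         star_linear ipH ipK epsH epsK X Y phi -> unital phi ->
         contractive ipH ipK X phi -> superpositive ipH ipK epsH epsK X phi),
      (forall phi : (H -> H) -> (K -> K),
         star_linear ipH ipK epsH epsK X Y phi -> unital phi ->
         completely_contractive ipH ipK X phi ->
         completely_superpositive ipH ipK epsH epsK X phi),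
      (forall psi : (H -> H) -> (K -> K),
         star_linear ipH ipK epsH epsK X Y psi ->
         completely_superpositive ipH ipK epsH epsK X psi ->
         forall d : R, opnorm_le ipK (psi id) d -> cb_le ipH ipK X psi (8 * d)) &
      (forall psi : (H -> H) -> (K -> K),
         star_linear ipH ipK epsH epsK X Y psi ->
         completely_superpositive ipH ipK epsH epsK X psi ->
         unital psi -> cb_le ipH ipK X psi 4)].
Proof.
move=> hilbH hilbK gradH gradK opsysX _; split.
- move=> phi linphi unit_phi contr T hT.
  apply: (superpos_amplify_of_contractive hilbH hilbK opsysX linphi unit_phi) => //.
  by move=> m c hm /mnorm_le1 hmc; apply/mnorm_le1; apply: contr (hm ord0 ord0) hmc.
- move=> phi linphi unit_phi contr n x.
  exact: (superpos_amplify_of_contractive hilbH hilbK opsysX linphi unit_phi (contr n)).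
- move=> psi linpsi csp d hd; have d0 : 0 <= d by case: hd.
  rewrite (_ : 8 * d = 4 * (2 * d)); last by rewrite mulrA -natrM.
  apply: (cb_le_of_sform_le hilbH hilbK gradH gradK opsysX linpsi) => // [|n v].
    by rewrite mulr_ge0.
  by apply: (sform_le hilbK d0); apply: (vnorm2_opnorm_le hilbK).
- move=> psi linpsi csp unit_psi.
  rewrite -[4]mulr1; apply: (cb_le_of_sform_le hilbH hilbK gradH gradK opsysX linpsi) => // n v.
  by rewrite unit_psi (sform_self hilbK) mul1r.
Qed.
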